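(* Let $\mathcal{X}_0,\tilde{\mathcal{X}}_0,\mathcal{U}_0,\tilde{\mathcal{U}}_0$ be Polish spaces, let $F_*:\mathcal{X}_0\times\mathcal{U}_0\to\tilde{\mathcal{X}}_0\times\tilde{\mathcal{U}}_0$ be a bijection, and define the involution $F:\tilde{\mathcal{X}}_0\times\mathcal{X}_0\times\mathcal{U}_0\to\tilde{\mathcal{X}}_0\times\mathcal{X}_0\times\mathcal{U}_0$ by \[F(a,b,c):=\left(F_*^{(1)}(b,c),\,F_*^{-1}\left(a,F_*^{(2)}(b,c)\right)\right).\] For probability measures $\mu,\nu,\tilde\mu$ on $\mathcal{X}_0,\mathcal{U}_0,\tilde{\mathcal{X}}_0$ respectively, the following are equivalent: (a) $F^{(2,3)}(\tilde\mu\times\mu\times\nu)=\mu\times\nu$; (b) $F(\tilde\mu\times\mu\times\nu)=\tilde\mu\times\mu\times\nu$; (c) there exists a probability measure $\tilde\nu$ on $\tilde{\mathcal{U}}_0$ such that $F_*(\mu\times\nu)=\tilde\mu\times\tilde\nu$.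
   Context: A superscript $(i)$ denotes the $i$th coordinate of a map, and $(2,3)$ the pair of the 2nd and 3rd coordinates. For a measurable map $G$ and a measure $m$, $G(m):=m\circ G^{-1}$ is the pushforward. *)

From HB Require Import structures.
From mathcomp Require Import all_boot all_order all_algebra.
From mathcomp Require Import all_classical all_reals all_analysis.
Set Implicit Arguments. Unset Strict Implicit. Unset Printing Implicit Defensive.
Import Order.TTheory GRing.Theory Num.Theory.
Local Open Scope classical_set_scope.
Local Open Scope ring_scope.

(* The involution F(a,b,c) := (Fs^(1)(b,c), Fs^{-1}(a, Fs^(2)(b,c))),
   where Gs is the inverse of the bijection Fs. The triple product
   Xt x X x U is encoded as Xt * (X * U). *)
Definition Finv {Xt X U Ut : Type} (Fs : X * U -> Xt * Ut) (Gs : Xt * Ut -> X * U)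
  (p : Xt * (X * U)) : Xt * (X * U) :=
  ((Fs p.2).1, Gs (p.1, (Fs p.2).2)).

Definition Finv23 {Xt X U Ut : Type} (Fs : X * U -> Xt * Ut) (Gs : Xt * Ut -> X * U)
  (p : Xt * (X * U)) : X * U := (Finv Fs Gs p).2.

Definition meas_eq d (T : measurableType d) (R : realType)
  (m1 m2 : set T -> \bar R) : Prop :=
  forall A, measurable A -> m1 A = m2 A.

(* F factors as (a, (b, c)) |-> (a, F_*(b, c)) |-> (x~, (a, u~)) |-> (x~, F_*^-1(a, u~)),
   where (x~, u~) = F_*(b, c).  Since F_* o F^(2,3) is (a, (b, c)) |-> (a, F_*^(2)(b, c)),
   (a) gives F_*(mu x nu) = mu~ x F_*^(2)(mu x nu), which is (c).  Under (c) the first map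
   sends mu~ x mu x nu to mu~ x mu~ x nu~, which the middle permutation of coordinates
   preserves, so F(mu~ x mu x nu) = mu~ x F_*^-1(mu~ x nu~) = mu~ x mu x nu: this is (b).
   Projecting (b) to the last two coordinates gives (a). *)
From HB Require Import structures.
From mathcomp Require Import all_boot all_order all_algebra.
From mathcomp Require Import all_classical all_reals all_analysis.
Local Open Scope classical_set_scope.
Local Open Scope ring_scope.
Local Open Scope ereal_scope.

Definition exchange12 {T1 T2 T3 : Type} (p : T1 * (T2 * T3)) : T2 * (T1 * T3) :=
  (p.2.1, (p.1, p.2.2)).

Section product_measure1_pushforward.
Context {d1 d2 d3 : measure_display} {T1 : measurableType d1}
  {T2 : measurableType d2} {T3 : measurableType d3} {R : realType}.

Lemma meas_eq_pushforward {m m' : set T1 -> \bar R} {f : T1 -> T2} :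
  measurable_fun setT f -> meas_eq m m' ->
  meas_eq (pushforward m f) (pushforward m' f).
Proof.
move=> mf mm' A mA; apply: mm'.
by rewrite -[X in measurable X]setTI; exact: mf.
Qed.

Lemma measurable_fun_idX {g : T2 -> T3} : measurable_fun setT g ->
  measurable_fun setT (fun p : T1 * T2 => (p.1, g p.2)).
Proof.
move=> mg; apply: measurable_fun_pair; first exact: measurable_fst.
exact: measurableT_comp mg measurable_snd.
Qed.

Lemma product_measure1_pushforwardr (m1 : set T1 -> \bar R)
    (m2 : set T2 -> \bar R) (g : T2 -> T3) :
  m1 \x pushforward m2 g = pushforward (m1 \x m2) (fun p => (p.1, g p.2)).
Proof.
apply/funext => A; rewrite /pushforward /product_measure1.
by congr integral; apply/funext => x /=; congr m2.
Qed.

Lemma product_measure1_meas_eqr (m1 : set T1 -> \bar R) {m2 m2' : set T2 -> \bar R} :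
  meas_eq m2 m2' -> meas_eq (m1 \x m2) (m1 \x m2').
Proof.
move=> m22' A mA; rewrite /product_measure1; congr integral.
by apply/funext => x /=; apply/m22'/measurable_xsection.
Qed.

Lemma pushforward_snd_product_probability (P : probability T1 R)
    (m : {sigma_finite_measure set T2 -> \bar R}) :
  meas_eq (pushforward (P \x m) snd) m.
Proof.
move=> A mA; rewrite /pushforward -setTX product_measure1E //.
by rewrite -[RHS]mul1e; congr (_ * _); exact: probability_setT.
Qed.

Lemma measurable_exchange12 : measurable_fun setT (@exchange12 T1 T2 T3).
Proof.
apply: measurable_fun_pair; first exact: measurableT_comp measurable_fst measurable_snd.
apply: measurable_fun_pair; first exact: measurable_fst.
exact: measurableT_comp measurable_snd measurable_snd.
Qed.

HB.instance Definition _ :=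
  isMeasurableFun.Build _ _ _ _ exchange12 measurable_exchange12.

Lemma product_measure1_exchange12 (P1 : probability T1 R) (P2 : probability T2 R)
    (P3 : probability T3 R) :
  meas_eq (pushforward (P1 \x (P2 \x P3)) exchange12) (P2 \x (P1 \x P3)).
Proof.
move=> Z mZ; apply/esym.
apply: (@product_measure_unique _ _ _ _ _ P2 (P1 \x P3 : probability _ R)
  (distribution (P1 \x (P2 \x P3) : probability _ R) exchange12)) => //.
move=> A E mA mE; rewrite /distribution /pushforward /= /product_measure1.
rewrite (eq_integral (fun a => P2 A * P3 (xsection E a))); last first.
  move=> a _ /=.
  have -> : xsection (exchange12 @^-1` (A `*` E)) a = A `*` xsection E a.
    by apply/seteqP; split => -[b c]; rewrite /xsection /= !inE.
  exact: (product_measure1E P2 P3 mA (measurable_xsection a mE)).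
by rewrite ge0_integralZl //; exact: measurable_fun_xsection.
Qed.

End product_measure1_pushforward.

Section involution.
Context {R : realType} {d0 dt du dut : measure_display}
  {X : measurableType d0} {Xt : measurableType dt}
  {U : measurableType du} {Ut : measurableType dut}
  {Fs : X * U -> Xt * Ut} {Gs : Xt * Ut -> X * U}.
Hypotheses (FsK : cancel Fs Gs) (GsK : cancel Gs Fs)
  (mFs : measurable_fun [set: X * U] Fs) (mGs : measurable_fun [set: Xt * Ut] Gs).
Context {mu : probability X R} {nu : probability U R} {mut : probability Xt R}.

Definition Fs_snd (p : X * U) : Ut := (Fs p).2.

Lemma measurable_Fs_snd : measurable_fun setT Fs_snd.
Proof. exact: measurableT_comp measurable_snd mFs. Qed.

HB.instance Definition _ := isMeasurableFun.Build _ _ _ _ Fs_snd measurable_Fs_snd.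

Lemma Fs_Finv23 : Fs \o Finv23 Fs Gs = fun p => (p.1, Fs_snd p.2).
Proof. by apply/funext => p; rewrite /= /Finv23 /Finv GsK. Qed.

Lemma pushforward_Fs_of_Finv23 :
  meas_eq (pushforward (mut \x (mu \x nu)) (Finv23 Fs Gs)) (mu \x nu) ->
  exists nut : probability Ut R, meas_eq (pushforward (mu \x nu) Fs) (mut \x nut).
Proof.
move=> h23; exists (distribution (mu \x nu) Fs_snd) => Z mZ.
transitivity (pushforward (mut \x (mu \x nu)) (Fs \o Finv23 Fs Gs) Z).
  exact/esym/(meas_eq_pushforward mFs h23).
by rewrite Fs_Finv23 /distribution product_measure1_pushforwardr.
Qed.

Lemma Finv_preserving_of_pushforward_Fs {nut : probability Ut R} :
  meas_eq (pushforward (mu \x nu) Fs) (mut \x nut) ->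
  meas_eq (pushforward (mut \x (mu \x nu)) (Finv Fs Gs)) (mut \x (mu \x nu)).
Proof.
move=> hFs Z mZ.
have hGs : meas_eq (pushforward (mut \x nut) Gs) (mu \x nu).
  move=> A mA; rewrite -[LHS](meas_eq_pushforward mGs hFs A mA) /pushforward.
  by congr (_ _); apply/seteqP; split => p; rewrite /preimage /= FsK.
have mGsX := measurable_fun_idX (T1 := Xt) mGs.
change (pushforward (pushforward (mut \x (mu \x nu))
  (fun p => (p.1, Fs p.2))) ((fun q => (q.1, Gs q.2)) \o exchange12) Z =
  (mut \x (mu \x nu)) Z).
rewrite -product_measure1_pushforwardr.
rewrite [LHS](meas_eq_pushforward _ (product_measure1_meas_eqr _ hFs)) //; last first.
  exact: measurableT_comp mGsX measurable_exchange12.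
change (pushforward (pushforward (mut \x (mut \x nut)) exchange12)
  (fun q => (q.1, Gs q.2)) Z = (mut \x (mu \x nu)) Z).
rewrite [LHS](meas_eq_pushforward mGsX (product_measure1_exchange12 _ _ _)) //.
rewrite -product_measure1_pushforwardr.
by rewrite [LHS](product_measure1_meas_eqr _ hGs).
Qed.

Lemma Finv23_preserving_of_Finv_preserving :
  meas_eq (pushforward (mut \x (mu \x nu)) (Finv Fs Gs)) (mut \x (mu \x nu)) ->
  meas_eq (pushforward (mut \x (mu \x nu)) (Finv23 Fs Gs)) (mu \x nu).
Proof.
move=> hF Z mZ.
rewrite -[RHS](pushforward_snd_product_probability mut (mu \x nu : probability _ R) Z mZ).
exact: meas_eq_pushforward measurable_snd hF Z mZ.
Qed.

End involution.

Theorem proposition2p8 (R : realType)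
  (d0 dt du dut : measure_display)
  (X : measurableType d0) (Xt : measurableType dt)
  (U : measurableType du) (Ut : measurableType dut)
  (Fs : X * U -> Xt * Ut) (Gs : Xt * Ut -> X * U)
  (FsK : cancel Fs Gs) (GsK : cancel Gs Fs)
  (mFs : measurable_fun [set: X * U] Fs)
  (mGs : measurable_fun [set: Xt * Ut] Gs)
  (mu : probability X R) (nu : probability U R) (mut : probability Xt R) :
  [<-> meas_eq (pushforward (mut \x (mu \x nu)) (Finv23 Fs Gs)) (mu \x nu);
       meas_eq (pushforward (mut \x (mu \x nu)) (Finv Fs Gs)) (mut \x (mu \x nu));
       exists nut : probability Ut R,
         meas_eq (pushforward (mu \x nu) Fs) (mut \x nut)].
Proof.
tfae.
- by move=> /(pushforward_Fs_of_Finv23 GsK mFs) [nut]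
    /(Finv_preserving_of_pushforward_Fs FsK mGs).
- by move=> /Finv23_preserving_of_Finv_preserving
    /(pushforward_Fs_of_Finv23 GsK mFs).
- by move=> [nut] /(Finv_preserving_of_pushforward_Fs FsK mGs)
    /Finv23_preserving_of_Finv_preserving.
Qed.
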